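(* There is no function $f:\Gamma^{\pm}(2)\to\mathbb C^\times$ such that $\overline C(h_1,h_2)=f(h_1)f(h_2)f(h_1h_2)^{-1}$ for all $h_1,h_2\in\Gamma^\pm(2)$; i.e. the restriction of the class of $\overline C$ to $\Gamma^\pm(2)$ is non-trivial.
   Context: $\Gamma^\pm(2)=\{g\in GL_2(\mathbb Z):g\equiv I\pmod 2\}$. Hilbert symbol $(x,y)_{\mathbb R}=-1$ if $x<0,y<0$, else $1$. For $g=\begin{pmatrix}a&b\\c&d\end{pmatrix}\in SL_2(\mathbb R)$: $x(g)=d$ if $c=0$, $x(g)=c$ otherwise; $\bar c(g_1,g_2)=(x(g_1),x(g_2))_{\mathbb R}(-x(g_1)x(g_2),x(g_1g_2))_{\mathbb R}$; $\nu_2(y,g)=(y,a)_{\mathbb R}$ if $c=0$ and $\nu_2(y,g)=1$ if $c\ne0$. Let $s(y)=\operatorname{diag}(1,y)$. For $h_1,h_2\in GL_2(\mathbb R)$ put $y_i=\det h_i$, $g_i=s(y_i)^{-1}h_i\in SL_2(\mathbb R)$, and $\overline C(h_1,h_2)=\nu_2(y_2,g_1)\,\bar c(s(y_2)^{-1}g_1s(y_2),g_2)$; this is the $\{\pm1\}$-valued 2-cocycle defining the two-fold cover $\overline{GL}_2(\mathbb R)$. *)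

From Stdlib Require Import Reals ZArith.
From Coquelicot Require Import Coquelicot.
Open Scope R_scope.

(* 2x2 real matrices [[a, b], [c, d]] *)
Record M2 := mkM2 { ma : R; mb : R; mc : R; md : R }.

Definition mmul (g h : M2) : M2 :=
  mkM2 (ma g * ma h + mb g * mc h) (ma g * mb h + mb g * md h)
       (mc g * ma h + md g * mc h) (mc g * mb h + md g * md h).

Definition mdet (g : M2) : R := ma g * md g - mb g * mc g.

Definition hilbR (x y : R) : R :=
  if Rlt_dec x 0 then (if Rlt_dec y 0 then -1 else 1) else 1.

Definition xfun (g : M2) : R := if Req_EM_T (mc g) 0 then md g else mc g.

Definition cbar (g1 g2 : M2) : R :=
  hilbR (xfun g1) (xfun g2) * hilbR (- (xfun g1 * xfun g2)) (xfun (mmul g1 g2)).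

Definition nu2 (y : R) (g : M2) : R :=
  if Req_EM_T (mc g) 0 then hilbR y (ma g) else 1.

Definition sdiag (y : R) : M2 := mkM2 1 0 0 y.
Definition sdiag_inv (y : R) : M2 := mkM2 1 0 0 (/ y).

Definition gpart (h : M2) : M2 := mmul (sdiag_inv (mdet h)) h.

Definition Cbar (h1 h2 : M2) : R :=
  let y2 := mdet h2 in
  nu2 y2 (gpart h1) * cbar (mmul (mmul (sdiag_inv y2) (gpart h1)) (sdiag y2)) (gpart h2).

Definition in_Gamma_pm2 (h : M2) : Prop :=
  exists a b c d : Z,
    ma h = IZR a /\ mb h = IZR b /\ mc h = IZR c /\ md h = IZR d /\
    (a mod 2 = 1)%Z /\ (b mod 2 = 0)%Z /\ (c mod 2 = 0)%Z /\ (d mod 2 = 1)%Z /\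
    ((a * d - b * c = 1)%Z \/ (a * d - b * c = -1)%Z).

(* The diagonal matrices -I and diag(-1, 1) of Gamma^pm(2) commute, while the
   cocycle takes different values on them in the two orders: on diagonal
   matrices it reduces to a product of two Hilbert symbols, giving
   C(-I, diag(-1,1)) = 1 but C(diag(-1,1), -I) = -1.  A coboundary
   f(h1) f(h2) / f(h1 h2) is symmetric on commuting pairs, so no such f exists. *)
From Stdlib Require Import Reals ZArith Lra.
From Coquelicot Require Import Coquelicot.

Lemma coboundary_sym_of_commute {G : Type} (mul : G -> G -> G)
    (c : G -> G -> R) (f : G -> C) (g h : G) :
  mul g h = mul h g ->
  RtoC (c g h) = Cmult (Cmult (f g) (f h)) (Cinv (f (mul g h))) ->
  RtoC (c h g) = Cmult (Cmult (f h) (f g)) (Cinv (f (mul h g))) ->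
  c g h = c h g.
Proof.
  intros Hcomm Hgh Hhg.
  apply RtoC_inj.
  rewrite Hgh, Hhg, Hcomm, (Cmult_comm (f g)).
  reflexivity.
Qed.

Lemma Rinv_lt_0_iff (x : R) : / x < 0 <-> x < 0.
Proof.
  split; intros Hx; [rewrite <- (Rinv_inv x) |]; apply Rinv_lt_0_compat; exact Hx.
Qed.

Lemma hilbR_inv (x y : R) : hilbR (/ x) (/ y) = hilbR x y.
Proof.
  pose proof (Rinv_lt_0_iff x); pose proof (Rinv_lt_0_iff y).
  unfold hilbR.
  destruct (Rlt_dec x 0), (Rlt_dec (/ x) 0), (Rlt_dec y 0), (Rlt_dec (/ y) 0);
    tauto || reflexivity.
Qed.

Lemma hilbR_opp_diag (x : R) : hilbR (- x) x = 1.
Proof.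
  unfold hilbR.
  destruct (Rlt_dec (- x) 0), (Rlt_dec x 0); lra.
Qed.

Definition mdiag (a d : R) : M2 := mkM2 a 0 0 d.

Lemma mmul_diag (a d a' d' : R) :
  mmul (mdiag a d) (mdiag a' d') = mdiag (a * a') (d * d').
Proof. unfold mmul, mdiag; cbn; f_equal; ring. Qed.

Lemma mmul_diag_comm (a d a' d' : R) :
  mmul (mdiag a d) (mdiag a' d') = mmul (mdiag a' d') (mdiag a d).
Proof. rewrite !mmul_diag, (Rmult_comm a), (Rmult_comm d); reflexivity. Qed.

Lemma mdet_diag (a d : R) : mdet (mdiag a d) = a * d.
Proof. unfold mdet, mdiag; cbn; ring. Qed.

Lemma xfun_diag (a d : R) : xfun (mdiag a d) = d.
Proof.
  unfold xfun, mdiag; cbn.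
  destruct (Req_EM_T 0 0); [reflexivity | contradiction].
Qed.

Lemma nu2_diag (y a d : R) : nu2 y (mdiag a d) = hilbR y a.
Proof.
  unfold nu2, mdiag; cbn.
  destruct (Req_EM_T 0 0); [reflexivity | contradiction].
Qed.

Lemma gpart_diag (a d : R) : a <> 0 -> d <> 0 -> gpart (mdiag a d) = mdiag a (/ a).
Proof.
  intros Ha Hd.
  unfold gpart; rewrite mdet_diag.
  unfold mmul, sdiag_inv, mdiag; cbn; f_equal; field; auto.
Qed.

Lemma conj_sdiag_diag (y a d : R) :
  y <> 0 -> mmul (mmul (sdiag_inv y) (mdiag a d)) (sdiag y) = mdiag a d.
Proof.
  intros Hy.
  unfold mmul, sdiag_inv, sdiag, mdiag; cbn; f_equal; field; exact Hy.
Qed.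

(* The second Hilbert symbol of cbar has the form (-p, p) and so drops out. *)
Lemma cbar_diag_SL2 (a a' : R) :
  cbar (mdiag a (/ a)) (mdiag a' (/ a')) = hilbR a a'.
Proof.
  unfold cbar; rewrite mmul_diag, !xfun_diag, hilbR_opp_diag, hilbR_inv.
  ring.
Qed.

Lemma Cbar_diag (a d a' d' : R) :
  a <> 0 -> d <> 0 -> a' <> 0 -> d' <> 0 ->
  Cbar (mdiag a d) (mdiag a' d') = hilbR (a' * d') a * hilbR a a'.
Proof.
  intros Ha Hd Ha' Hd'.
  unfold Cbar.
  rewrite mdet_diag, !gpart_diag, nu2_diag, conj_sdiag_diag, cbar_diag_SL2;
    auto using Rmult_integral_contrapositive_currified.
Qed.

Lemma mdiag_sign_in_Gamma_pm2 (a d : Z) :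
  (a = 1 \/ a = -1)%Z -> (d = 1 \/ d = -1)%Z -> in_Gamma_pm2 (mdiag (IZR a) (IZR d)).
Proof.
  intros Ha Hd.
  exists a, 0%Z, 0%Z, d.
  destruct Ha as [-> | ->], Hd as [-> | ->];
    repeat split; cbn; auto.
Qed.

Theorem mainTheorem14 :
  ~ (exists f : M2 -> C,
       (forall h, in_Gamma_pm2 h -> f h <> RtoC 0) /\
       (forall h1 h2, in_Gamma_pm2 h1 -> in_Gamma_pm2 h2 ->
          RtoC (Cbar h1 h2) = Cmult (Cmult (f h1) (f h2)) (Cinv (f (mmul h1 h2))))).
Proof.
  intros [f [_ Hcob]].
  assert (HA : in_Gamma_pm2 (mdiag (-1) (-1))) by (apply mdiag_sign_in_Gamma_pm2; auto).
  assert (HB : in_Gamma_pm2 (mdiag (-1) 1)) by (apply mdiag_sign_in_Gamma_pm2; auto).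
  assert (Hsym : Cbar (mdiag (-1) (-1)) (mdiag (-1) 1) = Cbar (mdiag (-1) 1) (mdiag (-1) (-1))).
  { apply (coboundary_sym_of_commute mmul Cbar f);
      [apply mmul_diag_comm | apply Hcob; assumption | apply Hcob; assumption]. }
  rewrite !Cbar_diag in Hsym by lra.
  revert Hsym; unfold hilbR.
  repeat destruct Rlt_dec; lra.
Qed.
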